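(* Let $X$ be a separable Hilbert space, $N\ge1$, and $F\subset H^2(\mathbb{D},X)$ a family of functions. Then $F$ is cyclic for $S^*$ in $H^2(\mathbb{D},X)$ if and only if the family $\{\Psi_N(S^{*j}f): f\in F,\ 0\le j\le N-1\}$ is cyclic for $S^*$ in $H^2(\mathbb{D},X^N)$.
   Context: $\Psi_N:H^2(\mathbb{D},X)\to H^2(\mathbb{D},X^N)$ is defined by $\Psi_N(f)(z)=\sum_{k\ge0}\big(\hat f(Nk),\hat f(Nk+1),\dots,\hat f(Nk+N-1)\big)z^k$. $S^*$ is the backward shift; a family $G$ is cyclic if the closed span of $\{S^{*n}g:n\ge0,g\in G\}$ is the whole space. *)

From Stdlib Require Import Reals.
From mathcomp Require Import all_boot.

Set Implicit Arguments.
Unset Strict Implicit.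

Open Scope R_scope.

Record C := mkC { Cre : R ; Cim : R }.
Definition C0 : C := mkC 0 0.
Definition C1 : C := mkC 1 0.
Definition Cadd (a b : C) : C := mkC (Cre a + Cre b) (Cim a + Cim b).
Definition Cmul (a b : C) : C :=
  mkC (Cre a * Cre b - Cim a * Cim b) (Cre a * Cim b + Cim a * Cre b).
Definition Cconj (a : C) : C := mkC (Cre a) (- Cim a).

Record HilbertSpace := {
  hT :> Type;
  hadd : hT -> hT -> hT;
  hzero : hT;
  hopp : hT -> hT;
  hscal : C -> hT -> hT;
  hinner : hT -> hT -> C;
  haddA : forall x y z, hadd x (hadd y z) = hadd (hadd x y) z;
  haddC : forall x y, hadd x y = hadd y x;
  hadd0 : forall x, hadd x hzero = x;
  haddN : forall x, hadd x (hopp x) = hzero;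
  hscal1 : forall x, hscal C1 x = x;
  hscalA : forall a b x, hscal a (hscal b x) = hscal (Cmul a b) x;
  hscalDr : forall a x y, hscal a (hadd x y) = hadd (hscal a x) (hscal a y);
  hscalDl : forall a b x, hscal (Cadd a b) x = hadd (hscal a x) (hscal b x);
  hinnerD : forall x y z, hinner (hadd x y) z = Cadd (hinner x z) (hinner y z);
  hinnerZ : forall a x y, hinner (hscal a x) y = Cmul a (hinner x y);
  hinnerC : forall x y, hinner y x = Cconj (hinner x y);
  hinner_ge0 : forall x, 0 <= Cre (hinner x x);
  hinner_eq0 : forall x, hinner x x = C0 -> x = hzero;
  hcomplete : forall u : nat -> hT,
    (forall eps, 0 < eps -> exists M, forall m n, (M <= m)%coq_nat -> (M <= n)%coq_nat ->
        sqrt (Cre (hinner (hadd (u m) (hopp (u n))) (hadd (u m) (hopp (u n))))) < eps) ->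
    exists x, forall eps, 0 < eps -> exists M, forall n, (M <= n)%coq_nat ->
        sqrt (Cre (hinner (hadd (u n) (hopp x)) (hadd (u n) (hopp x)))) < eps;
  hseparable : exists d : nat -> hT, forall x eps, 0 < eps -> exists n,
        sqrt (Cre (hinner (hadd x (hopp (d n))) (hadd x (hopp (d n))))) < eps
}.

Definition hnorm (X : HilbertSpace) (x : X) : R := sqrt (Cre (hinner x x)).

(* ---------- Coefficient spaces: a complex vector space together with the
   squared norm used to form H^2(D, V) = { sum a_n z^n : sum ||a_n||^2 < oo } ---------- *)
Record CoefSpace := {
  cT :> Type;
  cadd : cT -> cT -> cT;
  czero : cT;
  copp : cT -> cT;
  cscal : C -> cT -> cT;
  cnorm2 : cT -> R
}.

Definition coefX (X : HilbertSpace) : CoefSpace :=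
  {| cT := hT X; cadd := @hadd X; czero := @hzero X; copp := @hopp X;
     cscal := @hscal X; cnorm2 := fun x => Rsqr (hnorm x) |}.

Definition coefXN (X : HilbertSpace) (N : nat) : CoefSpace :=
  {| cT := 'I_N -> hT X;
     cadd := fun u v i => hadd (u i) (v i);
     czero := fun _ => hzero X;
     copp := fun u i => hopp (u i);
     cscal := fun a u i => hscal a (u i);
     cnorm2 := fun u => \big[Rplus/R0]_(i < N) Rsqr (hnorm (u i)) |}.

(* An element of H^2(D,V) is identified with its sequence of Taylor coefficients
   f(z) = sum_n (f n) z^n ; membership = square summability of the coefficient norms. *)
Definition in_H2 (V : CoefSpace) (f : nat -> V) : Prop :=
  exists l, infinite_sum (fun n => cnorm2 (f n)) l.

(* Backward shift S^* (f(z) - f(0))/z : coefficients shift left. *)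
Definition Sstar (V : CoefSpace) (f : nat -> V) : nat -> V := fun n => f (S n).

Inductive in_orbit_span (V : CoefSpace) (G : (nat -> V) -> Prop) : (nat -> V) -> Prop :=
  | orbit_span0 : in_orbit_span G (fun _ => czero V)
  | orbit_spanS : forall (c : C) (n : nat) (g p : nat -> V),
      G g -> in_orbit_span G p ->
      in_orbit_span G (fun k => cadd (cscal c (Nat.iter n (@Sstar V) g k)) (p k)).

(* G is cyclic for S^* in H^2(D,V): the closed linear span of {S^{*n} g} is all of
   H^2(D,V), i.e. this span is dense in the H^2 norm ||h|| = sqrt (sum_n ||h_n||^2). *)
Definition cyclic (V : CoefSpace) (G : (nat -> V) -> Prop) : Prop :=
  forall h : nat -> V, in_H2 h -> forall eps, 0 < eps ->
    exists p, in_orbit_span G p /\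
      exists l, infinite_sum (fun n => cnorm2 (cadd (h n) (copp (p n)))) l /\ sqrt l < eps.

Definition Psi (X : HilbertSpace) (N : nat) (f : nat -> coefX X) : nat -> coefXN X N :=
  fun k i => f (N * k + i)%N.
Arguments Psi {X} N f k i.

From Stdlib Require Import Reals Lra Lia FunctionalExtensionality.
From mathcomp Require Import all_boot.
From mathcomp Require Import zify.
From HB Require Import structures.

Open Scope R_scope.

(* The map Psi_N regroups the Taylor coefficients of f into consecutive blocks
   of length N.  The proof rests on three facts about it:
   - it is a bijection from coefficient sequences in X onto coefficient
     sequences in X^N (inverse: unPsi), and it commutes with the pointwise
     vector operations, so it is linear;
   - it preserves the H^2 norm, because a series of nonnegative terms and the
     series of its blocks of N consecutive terms have the same sum
     (infinite_sum_group);
   - it intertwines the backward shifts: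
       Psi_N (S^{*(kN+j)} f) = S^{*k} Psi_N (S^{*j} f).
   By the last fact and linearity, Psi_N maps the linear span of the S^*-orbits
   of F exactly onto the linear span of the S^*-orbits of the family
   {Psi_N (S^{*j} f) : f in F, j < N}.  An isometric linear bijection preserves
   density of subspaces, hence cyclicity transfers in both directions. *)

(* Real addition as a commutative monoid law, needed by the generic
   big-operator lemmas (e.g. big_ord_recr) on sums of reals. *)
HB.instance Definition _ := Monoid.isComLaw.Build R R0 Rplus
  (fun x y z => esym (Rplus_assoc x y z)) Rplus_comm Rplus_0_l.

(* Partial sums a 0 + ... + a (n-1); more convenient than Stdlib's
   sum_f_R0, which always has n+1 terms. *)
Fixpoint psum (a : nat -> R) (n : nat) : R :=
  match n with O => 0 | S n => psum a n + a n end.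

Lemma sum_f_R0_psum (a : nat -> R) (n : nat) : sum_f_R0 a n = psum a n.+1.
Proof. by elim: n => [|n IH] /=; [ring | rewrite IH]. Qed.

Lemma block_psum (a : nat -> R) (s j : nat) :
  \big[Rplus/R0]_(i < j) a (s + i)%N = psum a (s + j) - psum a s.
Proof.
elim: j => [|j IH]; first by rewrite big_ord0 addn0; ring.
by rewrite big_ord_recr /= IH addnS /=; ring.
Qed.

Lemma grouped_psum (a : nat -> R) (N K : nat) :
  sum_f_R0 (fun k => \big[Rplus/R0]_(i < N) a (N * k + i)%N) K = psum a (N * K.+1).
Proof.
elim: K => [|K IH] /=; first by rewrite block_psum muln0 add0n muln1 /=; ring.
by rewrite IH block_psum (mulnS N K.+1) (addnC N); ring.
Qed.

Lemma psum_nondecreasing {a : nat -> R} :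
  (forall m, 0 <= a m) -> forall {m n}, (m <= n)%N -> psum a m <= psum a n.
Proof.
move=> a_ge0 m; elim=> [|n IH]; first by rewrite leqn0 => /eqP ->; lra.
rewrite leq_eqVlt => /orP [/eqP -> | lt_mn]; first lra.
by have := IH lt_mn; have := a_ge0 n; rewrite /=; lra.
Qed.

(* Nonnegativity is what lets
   the partial sums of the ungrouped series be squeezed between two
   consecutive partial sums of the grouped one. *)
Lemma infinite_sum_group (a : nat -> R) (N : nat) (l : R) :
  (0 < N)%N -> (forall m, 0 <= a m) ->
  infinite_sum a l <->
  infinite_sum (fun k => \big[Rplus/R0]_(i < N) a (N * k + i)%N) l.
Proof.
move=> N_gt0 a_ge0; split=> sum_l eps eps_gt0; have [M HM] := sum_l eps eps_gt0.
- exists M => K le_MK; rewrite grouped_psum.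
  have le_KN : (K.+1 <= N * K.+1)%N by rewrite leq_pmull.
  have -> : (N * K.+1 = (N * K.+1).-1.+1)%N by lia.
  by rewrite -sum_f_R0_psum; apply: HM; lia.
- exists (N * M.+1)%N => n le_n; rewrite sum_f_R0_psum.
  set K := (n.+1 %/ N)%N.
  have lo : (N * K <= n.+1)%N by rewrite mulnC leq_divM.
  have hi : (n.+1 < N * K.+1)%N by rewrite mulnC ltn_ceil.
  have lt_MK : (M < K)%N.
    rewrite -ltnS -(ltn_pmul2l N_gt0); apply: leq_ltn_trans hi; lia.
  case: K lo hi lt_MK => [|K'] // lo hi lt_MK.
  have near_hi := HM K'.+1 ltac:(lia); have near_lo := HM K' ltac:(lia).
  rewrite grouped_psum in near_hi; rewrite grouped_psum in near_lo.
  have := psum_nondecreasing a_ge0 lo; have := psum_nondecreasing a_ge0 (ltnW hi).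
  rewrite /Rdist in near_hi near_lo *.
  move/Rabs_def2: near_hi; move/Rabs_def2: near_lo => ? ? ? ?.
  apply: Rabs_def1; lra.
Qed.

Lemma iter_Sstar (V : CoefSpace) (n : nat) (g : nat -> V) (m : nat) :
  Nat.iter n (@Sstar V) g m = g (n + m)%N.
Proof. by elim: n m => [|n IH] m //=; rewrite /Sstar IH addnS. Qed.

Section RegroupingMap.

Variables (X : HilbertSpace) (N : nat).
Hypothesis N_gt0 : (0 < N)%N.

Local Notation V := (coefX X).
Local Notation VN := (coefXN X N).

Definition regrouped_family (F : (nat -> V) -> Prop) (b : nat -> VN) : Prop :=
  exists f j, F f /\ (j < N)%N /\ b = Psi N (Nat.iter j (@Sstar V) f).

Definition unPsi (H : nat -> VN) : nat -> V :=
  fun m => H (m %/ N)%N (Ordinal (ltn_pmod m N_gt0)).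

Lemma Psi_unPsi (H : nat -> VN) : Psi N (unPsi H) = H.
Proof.
apply: functional_extensionality => k; apply: functional_extensionality => i.
rewrite /Psi /unPsi; congr (H _ _).
- by rewrite mulnC divnMDl // divn_small // addn0.
- by apply: val_inj; rewrite /= mulnC modnMDl modn_small.
Qed.

Lemma infinite_sum_norm_Psi (f : nat -> V) (l : R) :
  infinite_sum (fun m => cnorm2 (f m)) l <->
  infinite_sum (fun k => cnorm2 (Psi N f k)) l.
Proof. exact: infinite_sum_group N_gt0 (fun m => Rle_0_sqr (hnorm (f m))). Qed.

(* Since Psi_N acts coefficientwise, it is linear; hence it also preserves
   H^2 distances. *)
Lemma infinite_sum_dist_Psi (f g : nat -> V) (l : R) :
  infinite_sum (fun m => cnorm2 (cadd (f m) (copp (g m)))) l <->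
  infinite_sum (fun k => cnorm2 (@cadd VN (Psi N f k) (copp (Psi N g k)))) l.
Proof. exact: infinite_sum_norm_Psi (fun m => cadd (f m) (copp (g m))) l. Qed.

Lemma Psi_iter_Sstar (k j : nat) (f : nat -> V) :
  Psi N (Nat.iter (k * N + j) (@Sstar V) f) =
  Nat.iter k (@Sstar VN) (Psi N (Nat.iter j (@Sstar V) f)).
Proof.
apply: functional_extensionality => m; apply: functional_extensionality => i.
rewrite (iter_Sstar VN) /Psi !(iter_Sstar V); congr (f _); lia.
Qed.

Lemma span_Psi (F : (nat -> V) -> Prop) (p : nat -> V) :
  in_orbit_span F p -> in_orbit_span (regrouped_family F) (Psi N p).
Proof.
elim=> [|c n g q Fg _ span_Psi_q]; first exact: orbit_span0.
rewrite [in Nat.iter n](divn_eq n N).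
have -> : Psi N (fun m => cadd (cscal c (Nat.iter (n %/ N * N + n %% N) (@Sstar V) g m)) (q m))
  = (fun k => @cadd VN (cscal c (Nat.iter (n %/ N) (@Sstar VN)
                 (Psi N (Nat.iter (n %% N) (@Sstar V) g)) k)) (Psi N q k)).
  by rewrite -Psi_iter_Sstar.
apply: orbit_spanS => //.
by exists g, (n %% N)%N; rewrite ltn_pmod.
Qed.

Lemma span_unPsi {F : (nat -> V) -> Prop} {q : nat -> VN} :
  in_orbit_span (regrouped_family F) q ->
  exists p, in_orbit_span F p /\ q = Psi N p.
Proof.
elim=> [|c n b q' [f [j [Ff [_ ->]]]] _ [p [span_p ->]]].
  by exists (fun _ => hzero X); split; [exact: orbit_span0 |].
exists (fun m => @cadd V (cscal c (Nat.iter (n * N + j) (@Sstar V) f m)) (p m)).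
split; first exact: orbit_spanS.
by rewrite -Psi_iter_Sstar.
Qed.

(* Cyclicity transfers along Psi_N: approximate unPsi h and regroup. *)
Lemma cyclic_regrouped (F : (nat -> V) -> Prop) :
  cyclic F -> cyclic (regrouped_family F).
Proof.
move=> cycF H [l sum_H] eps eps_gt0.
have H2_h : in_H2 (unPsi H).
  by exists l; apply/infinite_sum_norm_Psi; rewrite Psi_unPsi.
have [p [span_p [l' [dist_p small]]]] := cycF _ H2_h eps eps_gt0.
exists (Psi N p); split; first exact: span_Psi.
exists l'; split => //.
by move/infinite_sum_dist_Psi: dist_p; rewrite Psi_unPsi.
Qed.

(* Cyclicity transfers back: approximate Psi_N h and pull the span back. *)
Lemma cyclic_of_regrouped (F : (nat -> V) -> Prop) :
  cyclic (regrouped_family F) -> cyclic F.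
Proof.
move=> cycG h [l sum_h] eps eps_gt0.
have H2_Psi_h : in_H2 (Psi N h) by exists l; apply/infinite_sum_norm_Psi.
have [q [span_q [l' [dist_q small]]]] := cycG _ H2_Psi_h eps eps_gt0.
have [p [span_p q_eq]] := span_unPsi span_q.
rewrite q_eq in dist_q.
by exists p; split => //; exists l'; split => //; apply/infinite_sum_dist_Psi.
Qed.

End RegroupingMap.

Theorem mainTheorem15 (X : HilbertSpace) (N : nat) (F : (nat -> coefX X) -> Prop) :
  (1 <= N)%N ->
  (forall f, F f -> in_H2 f) ->
  (cyclic F <->
   cyclic (V := coefXN X N)
     (fun b => exists f j, F f /\ (j < N)%N /\ b = Psi N (Nat.iter j (@Sstar (coefX X)) f))).
Proof.
(* The family on the right is regrouped_family N F. *)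
move=> N_gt0 _; split.
- exact: cyclic_regrouped.
- exact: cyclic_of_regrouped.
Qed.
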